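(* Let $u,v:\mathbb{Z}\times[0,1]\to\mathbb{R}$ have at most polynomial growth in their first variable, let $u$ be upper-semicontinuous (in $t$) and a viscosity subsolution, and $v$ lower-semicontinuous and a viscosity supersolution, of $-w_t(y,t)-\beta(w(y+1,t)-2w(y,t)+w(y-1,t))=0$ on $\mathbb{Z}\times[0,1)$. If $u(\cdot,1)\le v(\cdot,1)$, then $u\le v$ on $\mathbb{Z}\times[0,1)$.
   Context: $\beta>0$. A function $w$ on $\mathbb{Z}\times[0,1]$ has at most polynomial growth if $|w(y,t)|\le C(1+|y|^k)$ for some $C,k$. For locally bounded $w$, $w^*(y,t)=\limsup_{t'\to t}w(y,t')$ and $w_*(y,t)=\liminf_{t'\to t}w(y,t')$. $w$ is a viscosity subsolution (resp. supersolution) of the equation if for every $(y,t)\in\mathbb{Z}\times[0,1)$ and every $\varphi:\mathbb{Z}\times[0,1]\to\mathbb{R}$ continuously differentiable in $t$ such that $(y,t)$ is a maximum point of $w^*-\varphi$ (resp. minimum point of $w_*-\varphi$), one has $-\varphi_t(y,t)-\beta(w^*(y+1,t)-2w^*(y,t)+w^*(y-1,t))\le0$ (resp. $-\varphi_t(y,t)-\beta(w_*(y+1,t)-2w_*(y,t)+w_*(y-1,t))\ge0$). *)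

From HB Require Import structures.
From mathcomp Require Import all_boot all_order all_algebra.
From mathcomp Require Import all_classical all_reals all_analysis.
Set Implicit Arguments. Unset Strict Implicit. Unset Printing Implicit Defensive.
Import Order.TTheory GRing.Theory Num.Theory.
Import numFieldNormedType.Exports.
Local Open Scope classical_set_scope.
Local Open Scope ring_scope.

(* A function w : Z x [0,1] -> R is modelled as w : int -> R -> R; only the
   values at times t with 0 <= t <= 1 are ever used below. *)

Definition inI {R : realType} (t : R) : Prop := 0 <= t <= 1.

Definition poly_growth {R : realType} (w : int -> R -> R) : Prop :=
  exists (C : R) (k : nat), forall (y : int) (t : R), inI t ->
    `|w y t| <= C * (1 + (`|y|%:~R) ^+ k).

Definition usc_t {R : realType} (w : int -> R -> R) : Prop :=
  forall (y : int) (t : R), inI t -> forall e : R, 0 < e ->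
    exists2 d : R, 0 < d & forall s : R, inI s -> `|s - t| < d -> w y s < w y t + e.

Definition lsc_t {R : realType} (w : int -> R -> R) : Prop :=
  forall (y : int) (t : R), inI t -> forall e : R, 0 < e ->
    exists2 d : R, 0 < d & forall s : R, inI s -> `|s - t| < d -> w y t - e < w y s.

Definition ustar {R : realType} (w : int -> R -> R) (y : int) (t : R) : R :=
  inf [set sup [set w y s | s in [set s | inI s /\ `|s - t| < d]]
      | d in [set d : R | 0 < d]].

Definition lstar {R : realType} (w : int -> R -> R) (y : int) (t : R) : R :=
  sup [set inf [set w y s | s in [set s | inI s /\ `|s - t| < d]]
      | d in [set d : R | 0 < d]].

Definition C1_t {R : realType} (phi dphi : int -> R -> R) : Prop :=
  forall y : int,
    (forall t : R, inI t ->
       (fun h : R => h^-1 * (phi y (t + h) - phi y t))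
         @ within [set h : R | h != 0 /\ inI (t + h)] (nbhs (0 : R))
       --> dphi y t)
    /\ {within [set s : R | inI s], continuous (dphi y)}.

Definition dlap {R : realType} (w : int -> R -> R) (y : int) (t : R) : R :=
  w (y + 1)%R t - 2 * w y t + w (y - 1)%R t.

Definition visc_sub {R : realType} (beta : R) (w : int -> R -> R) : Prop :=
  forall (y : int) (t : R), 0 <= t < 1 ->
  forall phi dphi : int -> R -> R, C1_t phi dphi ->
    (forall (y' : int) (t' : R), inI t' ->
       ustar w y' t' - phi y' t' <= ustar w y t - phi y t) ->
    - dphi y t - beta * dlap (ustar w) y t <= 0.

Definition visc_super {R : realType} (beta : R) (w : int -> R -> R) : Prop :=
  forall (y : int) (t : R), 0 <= t < 1 ->
  forall phi dphi : int -> R -> R, C1_t phi dphi ->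
    (forall (y' : int) (t' : R), inI t' ->
       lstar w y t - phi y t <= lstar w y' t' - phi y' t') ->
    - dphi y t - beta * dlap (lstar w) y t >= 0.

From HB Require Import structures.
From mathcomp Require Import all_boot all_order all_algebra.
From mathcomp Require Import all_classical all_reals all_analysis.
From mathcomp Require Import ring lra.
Import Order.TTheory GRing.Theory Num.Theory.
Import numFieldNormedType.Exports.
Local Open Scope classical_set_scope.
Local Open Scope ring_scope.

(* Suppose u (y0, t0) > v (y0, t0).  The penalty
     psi (y, t) = del (1 + |y|)^(k+1) (2 - t)^p
   outgrows the polynomial growth of u and v, and for p > 2 beta 2^(k+2) it is a
   strict classical supersolution: the time decay of (2 - t)^p beats the
   discrete Laplacian of the spatial weight.  Maximize
     u (y, t) - v (y, s) - psi (y, t) - ka (t - s)^2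
   over Z x [0, 1]^2: only finitely many y compete, so semicontinuity and
   compactness give a maximum, and for ka large it is attained at times t, s < 1
   because u <= v at t = 1.  Testing the subsolution inequality at (y, t) and
   the supersolution inequality at (y, s) with the two frozen halves of this
   function, the coupling terms cancel and psi fails to be a strict
   supersolution at (y, t): a contradiction. *)

Section Comparison_principle.
Context {R : realType}.

(* Needed for [compact_cover] to find the pointed topology of [R * R]. *)
HB.instance Definition _ := isPointed.Build (R * R)%type (0, 0).

(** * Maxima *)

Lemma seq_argmax (T : eqType) (F : T -> R) (s : seq T) : s != [::] ->
  exists2 x, x \in s & forall z, z \in s -> F z <= F x.
Proof.
elim: s => [//|a s IH] _.
case: s IH => [|b s] IH.
  by exists a; rewrite ?mem_head // => z; rewrite inE => /eqP ->.
have [x xs Hx] := IH isT.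
have [le|lt] := leP (F a) (F x).
  exists x; first by rewrite inE xs orbT.
  by move=> z; rewrite inE => /orP [/eqP ->//|]; exact: Hx.
exists a; first exact: mem_head.
by move=> z; rewrite inE => /orP [/eqP ->//|/Hx H]; exact: le_trans H (ltW lt).
Qed.

Lemma absz_leS (y : int) (Y : nat) : (absz y <= Y.+1)%N ->
  (absz y <= Y)%N \/ y = Y.+1%:Z \/ y = - Y.+1%:Z.
Proof.
case: y => n /=.
  by rewrite leq_eqVlt ltnS => /orP [/eqP ->|]; [right; left|left].
by rewrite NegzE ltnS leq_eqVlt => /orP [/eqP ->|]; [right; right|left].
Qed.

Lemma argmax_absz_le (F : int -> R) (Y : nat) :
  exists2 y, (absz y <= Y)%N & forall z, (absz z <= Y)%N -> F z <= F y.
Proof.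
elim: Y => [|Y [y yY IH]].
  by exists 0 => // z; rewrite leqn0 absz_eq0 => /eqP ->.
have [x xin Hx] := @seq_argmax _ F [:: y; Y.+1%:Z; - Y.+1%:Z] isT.
exists x.
  by move: xin; rewrite !inE => /orP [/eqP ->|/orP [/eqP ->|/eqP ->]] //; exact: leqW.
move=> z /absz_leS [zY|[->|->]]; last 2 first.
- by apply: Hx; rewrite !inE eqxx orbT.
- by apply: Hx; rewrite !inE eqxx !orbT.
by apply: le_trans (IH _ zY) _; apply: Hx; exact: mem_head.
Qed.

Lemma inI_itv (t : R) : inI t <-> `[0, 1]%classic t.
Proof. by rewrite /inI /= in_itv. Qed.

Lemma inI1 : inI (1 : R).
Proof. by rewrite /inI ler01 lexx. Qed.

Lemma inI_lt1 (t : R) : 0 <= t < 1 -> inI t.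
Proof. by case/andP=> t0 /ltW t1; apply/andP. Qed.

Definition usc_square (G : R -> R -> R) : Prop :=
  forall t s, inI t -> inI s -> forall m, G t s < m ->
    exists2 d : R, 0 < d & forall t' s', inI t' -> inI s' ->
      `|t' - t| < d -> `|s' - s| < d -> G t' s' < m.

Lemma compact_improvement_absurd (A : set (R * R)) (f : R * R -> R)
    (q : R * R -> R * R) (r : R * R -> R) :
  compact A -> A !=set0 ->
  (forall p, A p -> [/\ A (q p), 0 < r p & forall x, A x -> ball p (r p) x -> f x < f (q p)]) ->
  False.
Proof.
move=> cA [a Aa] Hq.
have [D sD cov] : finite_subset_cover A (fun p => ball p (r p)) A.
  move: cA; rewrite compact_cover; apply => [p _|p Ap]; first exact: ball_open.
  by exists p => //; apply: ballxx; have [] := Hq p Ap.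
have D0 : finmap.enum_fset D != [::].
  have [p Dp _] := cov _ Aa.
  apply/eqP => E; have : p \in finmap.enum_fset D by exact: Dp.
  by rewrite E.
(* the best improvement q pm lies in the ball of some centre p, whose own
   improvement q p it must then beat *)
have [pm Dpm Hpm] := seq_argmax _ (f \o q) _ D0.
have Apm : A pm by have := sD _ Dpm; rewrite inE.
have [Aq _ _] := Hq pm Apm.
have [p Dp qp] := cov _ Aq.
have Ap : A p by have := sD _ Dp; rewrite inE.
have [_ _ H] := Hq p Ap.
by have := H _ Aq qp; rewrite ltNge (Hpm p Dp).
Qed.

Lemma usc_square_max (G : R -> R -> R) : usc_square G ->
  exists t s, [/\ inI t, inI s & forall t' s', inI t' -> inI s' -> G t' s' <= G t s].
Proof.
move=> Gusc; apply: contrapT => no_max.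
pose A : set (R * R) := `[0, 1]%classic `*` `[0, 1]%classic.
have inA p : A p <-> inI p.1 /\ inI p.2 by rewrite /A /= !inI_itv.
pose f p := G p.1 p.2.
have better p : exists q : R * R, A p -> A q /\ f p < f q.
  case: (pselect (A p)) => Ap; last by exists p.
  apply: contrapT => none; apply: no_max; exists p.1, p.2.
  have [I1 I2] := (inA p).1 Ap; split => // t' s' It Is.
  rewrite leNgt; apply/negP => lt; apply: none; exists (t', s') => _.
  by split => //; apply/inA.
have [q Hq] := choice better.
have radius p : exists d : R, A p -> 0 < d /\ forall x, A x -> ball p d x -> f x < f (q p).
  case: (pselect (A p)) => Ap; last by exists 1.
  have [I1 I2] := (inA p).1 Ap.
  have [d d0 Hd] := Gusc _ _ I1 I2 _ (Hq p Ap).2.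
  exists d => _; split => // x /inA[Ix1 Ix2] [/= b1 b2].
  by rewrite -ball_normE /= !(distrC p.1) !(distrC p.2) in b1 b2; exact: Hd.
have [r Hr] := choice radius.
apply: (compact_improvement_absurd A f q r).
- by apply: compact_setX; exact: segment_compact.
- by exists (0, 0); apply/inA; rewrite /inI /= lexx ler01.
by move=> p Ap; have [Aq _] := Hq p Ap; have [r0 Hrp] := Hr p Ap.
Qed.

(** * Semicontinuous envelopes *)

Implicit Types (w : int -> R -> R).

Definition bounded_t w : Prop :=
  forall y, exists B : R, forall s, inI s -> `|w y s| <= B.

Lemma poly_growth_bounded_t w : poly_growth w -> bounded_t w.
Proof. by move=> [C [k Hw]] y; exists (C * (1 + `|y|%:~R ^+ k)) => s /Hw. Qed.

Lemma ustar_usc w : bounded_t w -> usc_t w -> forall y t, inI t -> ustar w y t = w y t.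
Proof.
move=> wb usc y t It; have [B HB] := wb y.
pose S d := [set w y s | s in [set s | inI s /\ `|s - t| < d]].
have St d : 0 < d -> S d (w y t).
  by move=> d0; exists t => //; split => //; rewrite subrr normr0.
have Sub d : has_ubound (S d).
  by exists B => _ [s [Is _] <-]; exact: le_trans (ler_norm _) (HB s Is).
have Sge d : 0 < d -> w y t <= sup (S d) by move=> d0; exact: ub_le_sup (St d d0).
rewrite /ustar -/S; apply/eqP; rewrite eq_le; apply/andP; split; last first.
  apply: lb_le_inf => [|_ [d d0 <-]]; last exact: Sge.
  by exists (sup (S 1)); exists 1 => //; exact: ltr01.
apply/ler_addgt0Pr => e e0; have [d d0 Hd] := usc y t It e e0.
apply: le_trans (ge_inf _ _) _; first by exists (w y t) => _ [d' d0' <-]; exact: Sge.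
  by exists d.
apply: ge_sup; first by exists (w y t); exact: St.
by move=> _ [s [Is ds] <-]; apply/ltW/Hd.
Qed.

Lemma lstar_ustarN w y t : lstar w y t = - ustar (fun y s => - w y s) y t.
Proof.
rewrite /lstar /ustar /inf opprK; congr sup; rewrite [RHS]image_comp.
by apply: eq_imagel => d _ /=; rewrite image_comp.
Qed.

Lemma lstar_lsc w : bounded_t w -> lsc_t w -> forall y t, inI t -> lstar w y t = w y t.
Proof.
move=> wb lsc y t It; rewrite lstar_ustarN ustar_usc ?opprK //.
  by move=> z; have [B HB] := wb z; exists B => s /HB; rewrite normrN.
move=> z r Ir e e0; have [d d0 Hd] := lsc z r Ir e e0.
by exists d => // s Is /(Hd s Is); lra.
Qed.

Lemma bounded_t_uniform w (Y : nat) : bounded_t w ->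
  exists B : R, forall y t, (absz y <= Y)%N -> inI t -> `|w y t| <= B.
Proof.
move=> /choice [B HB]; have [yB _ HyB] := argmax_absz_le B Y.
by exists (B yB) => y t yY It; apply: le_trans (HB y t It) (HyB y yY).
Qed.


(** * Polynomial test functions and the penalty *)

Lemma C1_t_horner (P : int -> {poly R}) :
  C1_t (fun y t => (P y).[t]) (fun y t => ((P y)^`()).[t]).
Proof.
move=> y; split; last by apply: continuous_subspaceT => x; exact: continuous_horner.
move=> t _; rewrite -(@derive_val _ _ _ _ _ _ _ (is_derive_poly (P y) t)).
have -> : (fun h : R => h^-1 * ((P y).[t + h] - (P y).[t])) =
    (fun h => h^-1 *: ((horner (P y) \o shift t) (h *: 1) - (P y).[t])).
  by apply/funext => h /=; rewrite -[h%:A]/(h * 1) mulr1 [h + t]addrC.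
move: (@derivable_horner R (P y) t); apply: cvg_trans.
by apply: cvg_fmap2; apply: within_subset => h [].
Qed.

Lemma horner_near (Q : {poly R}) (x0 e : R) : 0 < e ->
  exists2 d : R, 0 < d & forall x, `|x - x0| < d -> `|Q.[x] - Q.[x0]| < e.
Proof.
move=> e0.
have := @cvgr_dist_lt _ _ _ _ _ (horner Q) Q.[x0] (@continuous_horner R Q x0) e e0.
move=> /(_ _)/(nbhs_ballP _ _).1 [d d0 Hd]; exists d => // x xd.
by rewrite distrC; apply: Hd; rewrite -ball_normE /= distrC.
Qed.

Definition weight (n : nat) (y : int) : R := (1 + `|y|%:~R) ^+ n.

Lemma weight_ge1 n y : 1 <= weight n y.
Proof. by apply: exprn_ege1; rewrite lerDl ler0z normr_ge0. Qed.

Lemma weight_gt0 n y : 0 < weight n y.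
Proof. exact: lt_le_trans ltr01 (weight_ge1 n y). Qed.

Lemma weightS n y : weight n.+1 y = (1 + `|y|%:~R) * weight n y.
Proof. exact: exprS. Qed.

Lemma weight_shift n y z : `|z| <= 1 -> weight n (y + z) <= 2 ^+ n * weight n y.
Proof.
move=> z1; rewrite /weight -exprMn; apply: lerXn2r; rewrite ?nnegrE.
- by rewrite addr_ge0 // ler0z normr_ge0.
- by rewrite mulr_ge0 // addr_ge0 // ler0z normr_ge0.
have : `|y + z| <= `|y| + 1 by apply: le_trans (ler_normD _ _) _; rewrite lerD2l.
rewrite -(ler_int R) intrD => yz.
have : 0 <= (`|y|%:~R : R) by rewrite ler0z normr_ge0.
lra.
Qed.

Lemma weight_dlap_le n y :
  weight n (y + 1) + weight n (y - 1) - 2 * weight n y <= 2 ^+ n.+1 * weight n y.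
Proof.
have h1 : weight n (y + 1) <= 2 ^+ n * weight n y by apply: weight_shift; rewrite normr1.
have h2 : weight n (y - 1) <= 2 ^+ n * weight n y.
  by apply: weight_shift; rewrite normrN normr1.
have := weight_ge1 n y; rewrite exprS; lra.
Qed.

Lemma poly_growth_weight (w : int -> R -> R) : poly_growth w ->
  exists (C : R) (k : nat), forall k', (k <= k')%N ->
    forall y t, inI t -> `|w y t| <= C * weight k' y.
Proof.
move=> [C [k Hw]]; exists (2 * `|C|), k => k' kk' y t It.
pose x : R := `|y|%:~R; have x0 : 0 <= x by rewrite ler0z normr_ge0.
have : 1 + x ^+ k <= 2 * weight k' y.
  have h1 : 1 <= 1 + x by rewrite lerDl.
  have h2 : x ^+ k <= (1 + x) ^+ k by apply: lerXn2r; rewrite ?nnegrE ?lerDr; lra.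
  have h3 : (1 + x) ^+ k <= weight k' y by exact: ler_weXn2l.
  have := weight_ge1 k' y; lra.
move=> /(ler_wpM2l (normr_ge0 C)); rewrite mulrCA mulrA => hx.
apply: le_trans (Hw y t It) (le_trans _ hx); apply: ler_wpM2r; last exact: ler_norm.
by rewrite addr_ge0 ?exprn_ge0.
Qed.

Definition penalty (del : R) (n p : nat) (y : int) : {poly R} :=
  (del * weight n y)%:P * (2%:P - 'X) ^+ p.

Lemma penaltyE del n p y t :
  (penalty del n p y).[t] = del * weight n y * (2 - t) ^+ p.
Proof. by rewrite /penalty !hornerE. Qed.

Lemma penalty_derivE del n p y t :
  ((penalty del n p y)^`()).[t] = - (del * weight n y * p%:R * (2 - t) ^+ p.-1).
Proof.
rewrite /penalty !derivCE !hornerE /= hornerMn hornerM horner_exp !hornerE.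
by rewrite -mulr_natr; ring.
Qed.

Lemma penalty_ge del n p y t : 0 <= del -> inI t ->
  del * weight n y <= (penalty del n p y).[t].
Proof.
move=> del0 /andP[_ t1]; rewrite penaltyE -[leLHS]mulr1; apply: ler_wpM2l.
  exact: mulr_ge0 del0 (ltW (weight_gt0 _ _)).
by apply: exprn_ege1; lra.
Qed.

Lemma penalty_ge0 del n p y t : 0 <= del -> inI t -> 0 <= (penalty del n p y).[t].
Proof.
move=> del0 It; apply: le_trans (penalty_ge del n p y t del0 It).
exact: mulr_ge0 del0 (ltW (weight_gt0 _ _)).
Qed.

Lemma penalty_small_at n p y0 t0 (g : R) : 0 < g -> inI t0 ->
  exists2 del : R, 0 < del & (penalty del n p y0).[t0] < g.
Proof.
move=> g0 It0; pose P := (penalty 1 n p y0).[t0].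
have P0 : 0 < P.
  have := penalty_ge 1 n p y0 t0 ler01 It0; rewrite mul1r.
  exact/lt_le_trans/weight_gt0.
exists (g / (2 * P)); first by rewrite divr_gt0 // mulr_gt0.
have -> : (penalty (g / (2 * P)) n p y0).[t0] = g / 2.
  have PE : P = weight n y0 * (2 - t0) ^+ p by rewrite /P penaltyE mul1r.
  have c0 : 0 < 2 - t0 by case/andP: It0 => _; lra.
  by rewrite penaltyE PE; field; rewrite !gt_eqF ?exprn_gt0 ?weight_gt0.
by rewrite ltr_pdivrMr // ltr_pMr // ltr1n.
Qed.

Lemma penalty_strict_super (beta del : R) (n p : nat) y t :
  0 <= beta -> 0 < del -> 2 * beta * 2 ^+ n.+1 < p%:R -> inI t ->
  0 < - ((penalty del n p y)^`()).[t] - beta * dlap (fun z s => (penalty del n p z).[s]) y t.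
Proof.
move=> beta0 del0 pK /andP[t0 t1].
have K0 : 0 <= 2 * beta * 2 ^+ n.+1 by rewrite !mulr_ge0 // exprn_ge0.
case: p pK => [|q] pK; first by move: pK; rewrite ltNge K0.
pose W := weight n y; pose c := 2 - t; pose X := del * W * c ^+ q.
have W0 : 0 < W := weight_gt0 n y.
have c1 : 1 <= c by rewrite /c; lra.
have X0 : 0 < X by rewrite /X !mulr_gt0 // exprn_gt0 // (lt_le_trans ltr01 c1).
have lapW := weight_dlap_le n y; rewrite -/W in lapW.
have lap : dlap (fun z s => (penalty del n q.+1 z).[s]) y t <= 2 * 2 ^+ n.+1 * X.
  rewrite /dlap !penaltyE exprS -/c -/W.
  have -> : del * weight n (y + 1) * (c * c ^+ q) - 2 * (del * W * (c * c ^+ q)) +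
      del * weight n (y - 1) * (c * c ^+ q) =
      c * (del * c ^+ q) * (weight n (y + 1) + weight n (y - 1) - 2 * W) by ring.
  have dc0 : 0 <= c * (del * c ^+ q).
    have c0 := le_trans ler01 c1.
    by apply: mulr_ge0 => //; apply: mulr_ge0; [exact: ltW | exact: exprn_ge0].
  apply: le_trans (ler_wpM2l dc0 lapW) _.
  have -> : c * (del * c ^+ q) * (2 ^+ n.+1 * W) = c * (2 ^+ n.+1 * X) by rewrite /X; ring.
  rewrite -(mulrA 2); apply: ler_wpM2r; last by rewrite /c; lra.
  by rewrite mulr_ge0 ?exprn_ge0 ?ltW.
rewrite penalty_derivE opprK /= -/W.
have -> : del * W * q.+1%:R * (2 - t) ^+ q = q.+1%:R * X by rewrite /X; ring.
have := ler_wpM2l beta0 lap.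
have : 2 * beta * 2 ^+ n.+1 * X < q.+1%:R * X by rewrite ltr_pM2r.
lra.
Qed.

Lemma penalty_dominates (u v : int -> R -> R) (Cu Cv del : R) (k p : nat) :
  0 < del ->
  (forall y t, inI t -> `|u y t| <= Cu * weight k y) ->
  (forall y t, inI t -> `|v y t| <= Cv * weight k y) ->
  exists Y : nat, forall y, ~~ (absz y <= Y)%N -> forall t s, inI t -> inI s ->
    u y t - v y s - (penalty del k.+1 p y).[t] < 0.
Proof.
move=> del0 Hu Hv; pose b := Num.max 0 ((Cu + Cv) / del).
exists (Num.Def.archi_bound b) => y; rewrite -ltnNge => yY t s It Is.
have Yb : b < (Num.Def.archi_bound b)%:R by apply: archi_boundP; rewrite le_max lexx.
have big : Cu + Cv < del * (1 + `|y|%:~R).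
  have -> : Cu + Cv = del * ((Cu + Cv) / del) by rewrite mulrC divfK ?gt_eqF.
  rewrite ltr_pM2l // -natr_absz.
  have : (Num.Def.archi_bound b)%:R < (absz y)%:R :> R by rewrite ltr_nat.
  have : (Cu + Cv) / del <= b by rewrite le_max lexx orbT.
  lra.
have W0 := weight_gt0 k y.
have : (Cu + Cv) * weight k y < del * weight k.+1 y by rewrite weightS mulrA ltr_pM2r.
have := penalty_ge del k.+1 p y t (ltW del0) It; have := Hu y t It; have := Hv y s Is.
have := ler_norm (u y t); have := ler_norm (- v y s); rewrite normrN.
lra.
Qed.

Lemma usc_max_int_square (G : int -> R -> R -> R) (Y : nat) y0 t0 s0 :
  (forall y, usc_square (G y)) ->
  (forall y, ~~ (absz y <= Y)%N -> forall t s, inI t -> inI s -> G y t s < 0) ->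
  inI t0 -> inI s0 -> 0 <= G y0 t0 s0 ->
  exists ys ts ss, [/\ inI ts, inI ss &
    forall y t s, inI t -> inI s -> G y t s <= G ys ts ss].
Proof.
move=> Gusc Gout It0 Is0 G0.
have max_y y : exists ts : R * R, [/\ inI ts.1, inI ts.2 &
    forall t s, inI t -> inI s -> G y t s <= G y ts.1 ts.2].
  by have [t [s ?]] := usc_square_max _ (Gusc y); exists (t, s).
have [TS HTS] := choice max_y.
have [ys _ Hys] := argmax_absz_le (fun y => G y (TS y).1 (TS y).2) Y.
have below y t s : (absz y <= Y)%N -> inI t -> inI s -> G y t s <= G ys (TS ys).1 (TS ys).2.
  by move=> yY It Is; have [_ _ H] := HTS y; exact: le_trans (H t s It Is) (Hys y yY).
exists ys, (TS ys).1, (TS ys).2; have [I1 I2 _] := HTS ys; split => // y t s It Is.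
have y0Y : (absz y0 <= Y)%N.
  by apply: contraT => /Gout/(_ t0 s0 It0 Is0); rewrite ltNge G0.
case: (boolP (absz y <= Y)%N) => yY; first exact: below.
exact: le_trans (ltW (Gout y yY t s It Is)) (le_trans G0 (below _ _ _ y0Y It0 Is0)).
Qed.

(** * Doubling the time variable *)

Section Doubling.
Variables (beta : R) (u v : int -> R -> R).
Hypotheses (beta_ge0 : 0 <= beta) (u_bounded : bounded_t u) (v_bounded : bounded_t v).
Hypotheses (u_usc : usc_t u) (v_lsc : lsc_t v).
Hypotheses (u_sub : visc_sub beta u) (v_super : visc_super beta v).
Hypothesis u_le_v_at_1 : forall y, u y 1 <= v y 1.

Definition doubled (psi : int -> {poly R}) (ka : R) (y : int) (t s : R) : R :=
  u y t - v y s - (psi y).[t] - ka * (t - s) ^+ 2.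

Lemma doubled_usc psi ka y : usc_square (doubled psi ka y).
Proof.
move=> t s It Is m Hm.
pose e := (m - doubled psi ka y t s) / 4.
have e0 : 0 < e by rewrite divr_gt0 // subr_gt0.
have [d1 d10 Hd1] := u_usc y t It e e0.
have [d2 d20 Hd2] := v_lsc y s Is e e0.
have [d3 d30 Hd3] := horner_near (psi y) t e e0.
have [d4 d40 Hd4] := horner_near (ka%:P * 'X ^+ 2) (t - s) e e0.
exists (Num.min (Num.min d1 d2) (Num.min d3 (d4 / 2))).
  by rewrite !lt_min d10 d20 d30 divr_gt0.
move=> t' s' It' Is'; rewrite !lt_min.
move=> /andP[/andP[h1 _] /andP[h3 h4]] /andP[/andP[_ h2] /andP[_ h4']].
have := Hd1 t' It' h1; have := Hd2 s' Is' h2.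
have /Hd3 := h3; rewrite ltr_distl => /andP[p1 _].
have : `|(t' - s') - (t - s)| < d4.
  rewrite (_ : _ - _ = (t' - t) - (s' - s)); last by ring.
  apply: le_lt_trans (ler_normB _ _) _; lra.
move=> /Hd4; rewrite !hornerCM !hornerXn ltr_distl => /andP[q1 _].
have : m = doubled psi ka y t s + 4 * e by rewrite /e; field.
rewrite /doubled; lra.
Qed.

Lemma uniform_terminal_gap (Y : nat) (m : R) : 0 < m ->
  exists2 eta : R, 0 < eta & forall y t s, (absz y <= Y)%N -> inI t -> inI s ->
    `|t - 1| < eta -> `|s - 1| < eta -> u y t - v y s < m.
Proof.
move=> m0.
have gap y : exists d : R, 0 < d /\ forall t s, inI t -> inI s ->
    `|t - 1| < d -> `|s - 1| < d -> u y t - v y s < m.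
  have e0 : 0 < m / 2 by rewrite divr_gt0.
  have [d1 d10 Hd1] := u_usc y 1 inI1 _ e0; have [d2 d20 Hd2] := v_lsc y 1 inI1 _ e0.
  exists (Num.min d1 d2); split; first by rewrite lt_min d10 d20.
  move=> t s It Is; rewrite !lt_min => /andP[h1 _] /andP[_ h2].
  have := Hd1 t It h1; have := Hd2 s Is h2; have := u_le_v_at_1 y; lra.
have [d Hd] := choice gap; have [ym _ Hym] := argmax_absz_le (fun y => - d y) Y.
exists (d ym); first by have [] := Hd ym.
move=> y t s yY It Is ht hs; have := Hym y yY; rewrite lerN2 => dle.
by apply: (Hd y).2 => //; apply: lt_le_trans dle.
Qed.

(* ka makes |ts - ss| small enough for [uniform_terminal_gap] to rule out
   ts = 1 and ss = 1. *)
Lemma doubled_max_interior psi (Y : nat) y0 t0 :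
  (forall y t, inI t -> 0 <= (psi y).[t]) -> 0 <= t0 < 1 ->
  (psi y0).[t0] < u y0 t0 - v y0 t0 ->
  (forall y, ~~ (absz y <= Y)%N -> forall t s, inI t -> inI s ->
     u y t - v y s - (psi y).[t] < 0) ->
  exists ka ys ts ss, [/\ 0 <= ts < 1, 0 <= ss < 1 &
    forall y t s, inI t -> inI s -> doubled psi ka y t s <= doubled psi ka ys ts ss].
Proof.
move=> psi0 /inI_lt1 It0 gap0 Hout.
pose m := u y0 t0 - v y0 t0 - (psi y0).[t0]; have m0 : 0 < m by rewrite subr_gt0.
have [eta eta0 Heta] := uniform_terminal_gap Y m m0.
have [Bu HBu] := bounded_t_uniform u Y u_bounded.
have [Bv HBv] := bounded_t_uniform v Y v_bounded.
pose ka := (`|Bu| + `|Bv| + 1) / eta ^+ 2.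
have ka0 : 0 < ka by rewrite divr_gt0 ?exprn_gt0 // ltr_wpDl // addr_ge0.
have coupling0 t s : 0 <= ka * (t - s) ^+ 2 by rewrite mulr_ge0 ?sqr_ge0 ?ltW.
have Gout y : ~~ (absz y <= Y)%N -> forall t s, inI t -> inI s -> doubled psi ka y t s < 0.
  by move=> yY t s It Is; have := Hout y yY t s It Is; have := coupling0 t s; rewrite /doubled; lra.
have G0 : doubled psi ka y0 t0 t0 = m by rewrite /doubled subrr expr0n /= mulr0 subr0.
have G0_ge0 : 0 <= doubled psi ka y0 t0 t0 by rewrite G0 ltW.
have [ys [ts [ss [Its Iss Hmax]]]] :=
  usc_max_int_square _ _ _ _ _ (doubled_usc psi ka) Gout It0 It0 G0_ge0.
have mM : m <= doubled psi ka ys ts ss by rewrite -G0; exact: Hmax.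
have ysY : (absz ys <= Y)%N.
  by apply: contraT => /Gout/(_ ts ss Its Iss); rewrite ltNge (le_trans (ltW m0) mM).
have close : `|ts - ss| < eta.
  rewrite ltNge; apply/negP => far.
  have : eta ^+ 2 <= (ts - ss) ^+ 2.
    rewrite -[(ts - ss) ^+ 2]real_normK ?num_real //.
    by apply: lerXn2r; rewrite ?nnegrE ?normr_ge0 // ltW.
  move=> /(ler_wpM2l (ltW ka0)); rewrite {1}/ka divfK ?gt_eqF ?exprn_gt0 // => big.
  have := HBu ys ts ysY Its; have := HBv ys ss ysY Iss; have := psi0 ys ts Its.
  have := ler_norm (u ys ts); have := ler_norm (- v ys ss); rewrite normrN.
  have := ler_norm Bu; have := ler_norm Bv.
  by move: mM; rewrite /doubled; lra.
have below_1 t s : inI t -> inI s -> `|t - s| < eta -> t = 1 \/ s = 1 ->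
    doubled psi ka ys t s < m.
  move=> It Is ts_eta ts1; have := psi0 ys t It; have := coupling0 t s.
  have : u ys t - v ys s < m.
    by case: ts1 => E; apply: Heta; rewrite // -E ?subrr ?normr0 // distrC -?E.
  by rewrite /doubled; lra.
exists ka, ys, ts, ss; split => //.
- have /andP[ts0 ts1] := Its; rewrite ts0 lt_neqAle ts1 andbT; apply/eqP => E.
  by have := below_1 ts ss Its Iss close (or_introl E); rewrite ltNge mM.
- have /andP[ss0 ss1] := Iss; rewrite ss0 lt_neqAle ss1 andbT; apply/eqP => E.
  by have := below_1 ts ss Its Iss close (or_intror E); rewrite ltNge mM.
Qed.

Lemma doubled_max_not_strict_super psi ka ys ts ss :
  0 <= ts < 1 -> 0 <= ss < 1 ->
  (forall y t s, inI t -> inI s -> doubled psi ka y t s <= doubled psi ka ys ts ss) ->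
  - ((psi ys)^`()).[ts] - beta * dlap (fun y t => (psi y).[t]) ys ts <= 0.
Proof.
move=> ts01 ss01 Hmax.
have Its := inI_lt1 ts ts01.
have Iss := inI_lt1 ss ss01.
have uE := ustar_usc _ u_bounded u_usc; have vE := lstar_lsc _ v_bounded v_lsc.
pose P1 y : {poly R} := (v y ss)%:P + psi y + ka%:P * ('X - ss%:P) ^+ 2.
pose P2 y : {poly R} := (u y ts - (psi y).[ts])%:P - ka%:P * ('X - ts%:P) ^+ 2.
have sub := u_sub ys ts ts01 _ _ (C1_t_horner P1).
have super := v_super ys ss ss01 _ _ (C1_t_horner P2).
have {sub} sub : - ((psi ys)^`()).[ts] - ka * (2 * (ts - ss)) - beta * dlap u ys ts <= 0.
  have -> : dlap u ys ts = dlap (ustar u) ys ts by rewrite /dlap !uE.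
  have -> : - ((psi ys)^`()).[ts] - ka * (2 * (ts - ss)) = - ((P1 ys)^`()).[ts].
    by rewrite /P1 !derivCE !hornerE /=; ring.
  apply: sub => y t It; rewrite !uE // /P1 !hornerE /=.
  by have := Hmax y t ss It Iss; rewrite /doubled; lra.
have {super} super : 0 <= - (ka * (2 * (ts - ss))) - beta * dlap v ys ss.
  have -> : dlap v ys ss = dlap (lstar v) ys ss by rewrite /dlap !vE.
  have -> : - (ka * (2 * (ts - ss))) = - ((P2 ys)^`()).[ss].
    by rewrite /P2 !derivCE !hornerE /=; ring.
  apply: super => y s Is; rewrite !vE // /P2 !hornerE /=.
  have := Hmax y ts s Its Is; rewrite /doubled; lra.
have lap : dlap u ys ts - dlap v ys ss <= dlap (fun y t => (psi y).[t]) ys ts.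
  have := Hmax (ys + 1) ts ss Its Iss; have := Hmax (ys - 1) ts ss Its Iss.
  by rewrite /dlap /doubled; lra.
have := ler_wpM2l beta_ge0 lap; lra.
Qed.

End Doubling.

End Comparison_principle.

Theorem lemmaA3 (R : realType) (beta : R) (u v : int -> R -> R) :
  0 < beta ->
  poly_growth u -> poly_growth v ->
  usc_t u -> visc_sub beta u ->
  lsc_t v -> visc_super beta v ->
  (forall y : int, u y 1 <= v y 1) ->
  forall (y : int) (t : R), 0 <= t < 1 -> u y t <= v y t.
Proof.
move=> beta0 pgu pgv uscu subu lscv supv u_le_v y0 t0 t01.
rewrite leNgt; apply/negP; rewrite -subr_gt0 => gap.
have It0 := inI_lt1 t0 t01.
have [ub vb] := (poly_growth_bounded_t _ pgu, poly_growth_bounded_t _ pgv).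
have [Cu [ku Hu]] := poly_growth_weight _ pgu; have [Cv [kv Hv]] := poly_growth_weight _ pgv.
pose k := (ku + kv)%N; pose K : R := 2 * beta * 2 ^+ k.+2.
have [p Hp] : exists p : nat, K < p%:R.
  exists (Num.Def.archi_bound K); apply: archi_boundP.
  by apply: mulr_ge0; [apply: mulr_ge0 => //; exact: ltW | exact: exprn_ge0].
have [del del0 psi_y0] := penalty_small_at k.+1 p y0 t0 _ gap It0.
pose psi := penalty del k.+1 p.
have psi_ge0 y t : inI t -> 0 <= (psi y).[t] by exact: penalty_ge0 _ _ _ _ _ (ltW del0).
have [Y HY] := penalty_dominates u v Cu Cv del k p del0
  (fun y t => Hu k (leq_addr _ _) y t) (fun y t => Hv k (leq_addl _ _) y t).
have [ka [ys [ts [ss [ts01 ss01 Hmax]]]]] :=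
  doubled_max_interior u v ub vb uscu lscv u_le_v psi Y y0 t0 psi_ge0 t01 psi_y0 HY.
have Its := inI_lt1 ts ts01.
have := doubled_max_not_strict_super beta u v (ltW beta0) ub vb uscu lscv subu supv
  psi ka ys ts ss ts01 ss01 Hmax.
by have := penalty_strict_super beta del k.+1 p ys ts (ltW beta0) del0 Hp Its; lra.
Qed.
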